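(* Let $\Omega\subset\mathbb R^n$ be a bounded domain, $\alpha<0$, and $\varphi:\partial\Omega\to\mathbb R$ a positive function. If $u$ is a positive solution of $$\mathrm{div}\left(\frac{Du}{\sqrt{1-|Du|^2}}\right)=\frac{\alpha}{u\sqrt{1-|Du|^2}}\ \text{ in }\Omega,\qquad u=\varphi\ \text{ on }\partial\Omega,\qquad |Du|<1\ \text{ in }\overline\Omega,$$ then there exists a constant $C_1=C_1(\alpha,\Omega,\varphi)>0$, depending only on $\alpha$, $\Omega$ and $\varphi$, such that $$\min_{\partial\Omega}\varphi\le u\le C_1\quad\text{in }\Omega.$$ *)

From HB Require Import structures.
From mathcomp Require Import all_boot all_order all_algebra.
From mathcomp Require Import all_classical all_reals all_analysis.
Set Implicit Arguments. Unset Strict Implicit. Unset Printing Implicit Defensive.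
Import Order.TTheory GRing.Theory Num.Theory.
Import numFieldNormedType.Exports.
Local Open Scope classical_set_scope.
Local Open Scope ring_scope.

Section PDE.
Variables (R : realType) (n : nat).
Local Notation V := 'rV[R]_n.

Definition evec (i : 'I_n) : V := delta_mx 0 i.

Definition partial (f : V -> R) (i : 'I_n) (x : V) : R := 'D_(evec i) f x.

Definition grad_sq (u : V -> R) (x : V) : R := \sum_(i < n) (partial u i x) ^+ 2.

Definition eucl_sq (v : V) : R := \sum_(i < n) (v 0 i) ^+ 2.

Definition divergence (F : V -> V) (x : V) : R :=
  \sum_(i < n) partial (fun y => F y 0 i) i x.

Definition bdry (A : set V) : set V := closure A `\` interior A.

Definition C2_on (O : set V) (u : V -> R) : Prop :=
  forall x, O x ->
    (forall i, derivable u x (evec i)) /\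
    (forall i j, derivable (partial u i) x (evec j) /\
                 {for x, continuous (partial (partial u j) i)}).

Definition C1_closure_spacelike (O : set V) (u : V -> R) : Prop :=
  {within closure O, continuous u} /\
  exists G : V -> V,
    {within closure O, continuous G} /\
    (forall x, O x -> forall i, G x 0 i = partial u i x) /\
    (forall x, closure O x -> eucl_sq (G x) < 1).

Definition positive_solution (O : set V) (alpha : R) (phi u : V -> R) : Prop :=
  [/\ C2_on O u,
      C1_closure_spacelike O u,
      (forall x, O x -> 0 < u x),
      (forall x, O x ->
         divergence (fun y => \row_i (partial u i y / Num.sqrt (1 - grad_sq u y))) x
         = alpha / (u x * Num.sqrt (1 - grad_sq u x))) &
      (forall x, bdry O x -> u x = phi x)].

End PDE.

(* At an interior minimum x0 of u the gradient vanishes and every pure second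
   derivative is nonnegative, so the left-hand side of the equation reduces to
   the Laplacian of u at x0 and is >= 0, while the right-hand side is
   alpha / u x0 < 0.  Hence u attains its minimum over the compact closure of
   Omega on the boundary, where u = phi.

   For the upper bound, |Du| < 1 makes u 1-Lipschitz along the first
   coordinate direction.  The ray from x in that direction leaves Omega at a
   boundary point y with |y - x| <= 2 M, where Omega lies in the ball of
   radius M, so u x <= phi y + 2 M <= sup phi + 2 M. *)

From HB Require Import structures.
From mathcomp Require Import all_boot all_order all_algebra.
From mathcomp Require Import all_classical all_reals all_analysis lra.
Set Implicit Arguments. Unset Strict Implicit. Unset Printing Implicit Defensive.
Import Order.TTheory GRing.Theory Num.Theory.
Import numFieldNormedType.Exports.
Local Open Scope classical_set_scope.
Local Open Scope ring_scope.

Section restriction_to_lines.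
Variables (R : realType) (V : normedModType R).
Implicit Types (f : V -> R) (x v : V) (t : R).

Let difference_quotient_line f x v t :
  (fun h : R => h^-1 *: ((f \o shift (t *: v + x)) (h *: v) - f (t *: v + x))) =
  (fun h : R => h^-1 *: (((fun s : R => f (s *: v + x)) \o shift t) h%:A -
                          f (t *: v + x))).
Proof.
by apply/funext => h /=; rewrite [_%:A]mulr1 scalerDl addrA.
Qed.

Lemma derivable_line f x v t :
  derivable f (t *: v + x) v <-> derivable (fun s : R => f (s *: v + x)) t 1.
Proof. by rewrite /derivable difference_quotient_line. Qed.

Lemma derive_line f x v t :
  'D_v f (t *: v + x) = 'D_1 (fun s : R => f (s *: v + x)) t.
Proof. by rewrite /derive difference_quotient_line. Qed.

Lemma line0 x v : 0 *: v + x = x.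
Proof. by rewrite scale0r add0r. Qed.

Lemma line_continuous x v t : {for t, continuous (fun s : R => s *: v + x)}.
Proof. by apply: continuousD; [exact: scalel_continuous | exact: cvg_cst]. Qed.

Lemma near_line x v (P : V -> Prop) :
  (\forall y \near x, P y) -> \forall t \near (0 : R), P (t *: v + x).
Proof. by rewrite -{1}(line0 x v); apply: line_continuous. Qed.

End restriction_to_lines.

Section second_derivative_test.
Variable R : realType.
Implicit Types (g : R -> R) (a : R).

Lemma derive1_at_local_min g a :
  (\forall t \near a, g a <= g t) -> (\forall t \near a, derivable g t 1) ->
  'D_1 g a = 0.
Proof.
move=> gmin gder; have [r /= r0 Hr] := (nbhs_ballP _ _).1 (filterI gmin gder).
have ball_itv t : t \in `](a - r), (a + r)[ -> ball a r t.
  by rewrite in_itv /= -ball_normE /= ltr_distlC.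
apply/derive_val/(@derive1_at_min _ g (a - r) (a + r)).
- by rewrite lerD2l ge0_cp // ltW.
- by move=> t /ball_itv /Hr[].
- by rewrite in_itv /= ltrDl ltrBlDr ltrDl r0.
- by move=> t /ball_itv /Hr[].
Qed.

Lemma second_derive1_at_local_min_ge0 g a :
  (\forall t \near a, g a <= g t) -> (\forall t \near a, derivable g t 1) ->
  derivable ('D_1 g) a 1 -> 0 <= 'D_1 ('D_1 g) a.
Proof.
(* If g''(a) < 0 then, as g'(a) = 0, g' < 0 just right of a, and the mean
   value theorem gives g (a + d) < g a for small d > 0. *)
move=> gmin gder g'der; rewrite leNgt; apply/negP => g''lt0.
have g'a0 := derive1_at_local_min gmin gder.
have : \forall h \near 0^', h^-1 *: ('D_1 g (h%:A + a) - 'D_1 g a) < 0.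
  exact: cvgr_lt g'der _ g''lt0.
rewrite near_withinE => /(nbhs_ballP _ _)[e /= e0 He].
have [r /= r0 Hr] := (nbhs_ballP _ _).1 (filterI gmin gder).
pose d := Num.min e r / 2.
have d0 : 0 < d by rewrite divr_gt0 // lt_min e0 r0.
have [de dr] : d < e /\ d < r.
  by apply/andP; rewrite -lt_min ltr_pdivrMr // ltr_pMr ?ltr1n // lt_min e0 r0.
have ball_ad t : a <= t <= a + d -> ball a r t.
  move=> /andP[ta td]; rewrite -ball_normE /= distrC ger0_norm ?subr_ge0 //.
  by rewrite ltrBlDl (le_lt_trans td) // ltrD2l.
have g'neg t : t \in `](a), (a + d)[ -> 'D_1 g t < 0.
  rewrite in_itv /= => /andP[ta td].
  have t_a0 : 0 < t - a by rewrite subr_gt0.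
  have := He (t - a); rewrite -ball_normE /= sub0r normrN gtr0_norm //.
  rewrite (lt_trans _ de) ?ltrBlDl // => /(_ isT (lt0r_neq0 t_a0)).
  by rewrite [_%:A]mulr1 subrK g'a0 subr0 pmulr_rlt0 // invr_gt0.
have [c /g'neg g'c Emvt] : exists2 c, c \in `](a), (a + d)[ &
    g (a + d) - g a = 'D_1 g c * (a + d - a).
  apply: MVT; first by rewrite ltrDl.
    move=> t; rewrite in_itv /= => /andP[/ltW ta /ltW td]; apply/derivableP.
    by have /Hr[] : ball a r t by apply: ball_ad; rewrite ta td.
  by apply: derivable_within_continuous => t; rewrite in_itv /= => /ball_ad /Hr[].
have /ball_ad /Hr[+ _] : a <= a + d <= a + d by rewrite lexx lerDl (ltW d0).
by rewrite -subr_ge0 Emvt addrAC subrr add0r pmulr_lge0 // leNgt g'c.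
Qed.

End second_derivative_test.

Section directional.
Variables (R : realType) (V : normedModType R).
Implicit Types (f u w : V -> R) (x v : V).

Lemma derivable_line_continuous f x v :
  derivable f x v -> {for 0, continuous (fun t : R => f (t *: v + x))}.
Proof.
by move=> /derivable1P /derivable1_diffP /differentiable_continuous.
Qed.

Lemma deriveM_at_root f w x v : f x = 0 -> derivable f x v ->
  {for 0, continuous (fun t : R => w (t *: v + x))} ->
  'D_v (fun y => f y * w y) x = 'D_v f x * w x.
Proof.
move=> fx0 df /continuous_withinNx; rewrite line0 => cw; apply: cvg_lim => //.
have -> : (fun h : R => h^-1 *: (((fun y => f y * w y) \o shift x) (h *: v) - f x * w x)) =
  (fun h : R => h^-1 *: ((f \o shift x) (h *: v) - f x)) \* (fun h : R => w (h *: v + x)).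
  by apply/funext => h /=; rewrite fx0 !mul0r !subr0 -scalerAl.
exact: cvgM.
Qed.

Lemma derive_at_local_min u x v :
  (\forall y \near x, u x <= u y) -> (\forall y \near x, derivable u y v) ->
  'D_v u x = 0.
Proof.
move=> /(near_line v) umin /(near_line v) uder.
rewrite -(line0 x v) derive_line; apply: derive1_at_local_min.
  by rewrite line0.
by apply: filterS uder => t /derivable_line.
Qed.

Lemma second_derive_at_local_min_ge0 u x v :
  (\forall y \near x, u x <= u y) -> (\forall y \near x, derivable u y v) ->
  derivable ('D_v u) x v -> 0 <= 'D_v ('D_v u) x.
Proof.
move=> /(near_line v) umin /(near_line v) uder.
have Du_line : (fun t : R => 'D_v u (t *: v + x)) = 'D_1 (fun t : R => u (t *: v + x)).
  by apply/funext => t; rewrite derive_line.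
rewrite -{1 2}(line0 x v) derivable_line derive_line Du_line.
apply: second_derive1_at_local_min_ge0; first by rewrite line0.
by apply: filterS uder => t /derivable_line.
Qed.

End directional.

Section topology.
Variables (X Y Z : topologicalType).

Lemma continuous_closure_sub (f : X -> Y) (S : set X) (B : set Y) :
  continuous f -> (forall x, S x -> B (f x)) ->
  forall x, closure S x -> closure B (f x).
Proof.
move=> fc SB x Sx U /fc /Sx[s [Ss Us]]; exists (f s); split => //; exact: SB.
Qed.

Lemma continuous_within_comp (A : set X) (B : set Y) (f : X -> Y) (g : Y -> Z) :
  continuous f -> (forall x, A x -> B (f x)) -> {within B, continuous g} ->
  {within A, continuous (g \o f)}.
Proof.
move=> fc AB /subspace_continuousP gc; apply/subspace_continuousP => x Ax.
apply: cvg_comp (gc _ (AB _ Ax)) => P /= BP; rewrite nbhs_simpl.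
have := fc x _ BP; rewrite /within !nbhs_simpl /=.
by apply: filterS => y BPy Ay; apply/BPy/AB.
Qed.

End topology.

Lemma MVT_normB_le (R : realType) (g : R -> R) (a b L : R) : a < b ->
  {within `[a, b], continuous g} ->
  (forall t, t \in `]a, b[ -> derivable g t 1 /\ `|'D_1 g t| <= L) ->
  `|g b - g a| <= L * (b - a).
Proof.
move=> ab gc g'L.
have [c /g'L[_ g'c] ->] := MVT ab (fun t tab => derivableP (g'L t tab).1) gc.
have ba0 : 0 < b - a by rewrite subr_gt0.
by rewrite normrM (gtr0_norm ba0) ler_wpM2r // ltW.
Qed.

Section ray.
Variables (R : realType) (V : normedModType R).

Lemma closure_norm_le (A : set V) (M : R) :
  (forall z, A z -> `|z| <= M) -> forall z, closure A z -> `|z| <= M.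
Proof.
move=> AM z Az.
have ball_closed : closed (closed_ball_ Num.norm (0 : V) M).
  exact: closed_closed_ball_.
have := closureS (B := closed_ball_ Num.norm 0 M) _ Az.
rewrite -(closure_id _).1 // /closed_ball_ /= sub0r normrN; apply.
by move=> y /AM; rewrite /closed_ball_ /= sub0r normrN.
Qed.

Lemma ray_exit (A : set V) (x v : V) (M : R) : open A -> A x -> `|v| = 1 ->
  (forall z, A z -> `|z| <= M) ->
  exists T : R, [/\ 0 < T, T <= 2 * M, (forall s, 0 <= s < T -> A (s *: v + x)),
                   closure A (T *: v + x) & ~ A (T *: v + x)].
Proof.
rewrite openE => oA Ax v1 AM; pose l t := t *: v + x.
have dist_l s t : `|l s - l t| = `|s - t|.
  by rewrite /l opprD addrACA subrr addr0 -scalerBl normrZ v1 mulr1.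
(* T := sup S is the first time the ray leaves A. *)
pose S := [set t | 0 <= t /\ forall s, 0 <= s <= t -> A (l s)].
have S0 : S 0 by split => // s; rewrite -eq_le => /eqP <-; rewrite /l line0.
have S_le t : S t -> t <= 2 * M.
  case=> t0 /(_ t); rewrite t0 lexx => /(_ isT) /AM ltM_t.
  have : `|l t - l 0| <= M + M.
    by rewrite (le_trans (ler_normB _ _)) // lerD // AM // /l line0.
  by rewrite dist_l subr0 ger0_norm // mulr_natl mulr2n.
have supS : has_sup S by split; [exists 0 | exists (2 * M) => t /S_le].
set T := sup S.
have T0 : 0 <= T by exact: sup_upper_bound.
have A_before s : 0 <= s < T -> A (l s).
  move=> /andP[s0 sT]; have Ts0 : 0 < T - s by rewrite subr_gt0.
  have [t [_ At] st] := sup_adherent Ts0 supS.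
  by apply: At; rewrite s0 /=; move: st; rewrite opprB addrC subrK => /ltW.
have notA : ~ A (l T).
  move=> AlT; have /(nbhs_ballP _ _)[r /= r0 Tball] := oA _ AlT.
  suff : T + r / 2 <= T by rewrite gerDl leNgt divr_gt0.
  apply: sup_upper_bound => //; split => [|s /andP[s0 sTr]].
    by rewrite addr_ge0 // divr_ge0 // ltW.
  have [sT|Ts] := ltP s T; first by apply: (A_before s); rewrite s0.
  apply: Tball; rewrite -ball_normE /= dist_l distrC ger0_norm ?subr_ge0 //.
  by rewrite ltrBlDl (le_lt_trans sTr) // ltrD2l ltr_pdivrMr // ltr_pMr ?ltr1n.
exists T; split => //.
- rewrite lt_def T0 andbT; apply: contra_notN notA => /eqP ->.
  by rewrite /l line0.
- by apply: ge_sup => [|t /S_le]; first by exists 0.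
- apply: (@continuous_closure_sub _ _ l S) => [|t [t0]|].
  + by move=> t; exact: line_continuous.
  + by apply; rewrite t0 lexx.
  + by apply: closure_sup; [exists 0 | case: supS].
Qed.

Lemma exit_point_le (A : set V) (u : V -> R) (x v : V) (M L : R) :
  open A -> A x -> `|v| = 1 -> (forall z, A z -> `|z| <= M) ->
  {within closure A, continuous u} ->
  (forall z, A z -> derivable u z v /\ `|'D_v u z| <= L) ->
  exists2 y, closure A y /\ ~ A y & u x <= u y + L * (2 * M).
Proof.
move=> oA Ax v1 AM uc uL.
have [T [T0 TM A_before clA notA]] := ray_exit oA Ax v1 AM.
exists (T *: v + x) => //.
have L0 : 0 <= L by apply: le_trans (uL x Ax).2.
have : `|u (T *: v + x) - u (0 *: v + x)| <= L * (T - 0).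
  apply: (@MVT_normB_le _ (fun t => u (t *: v + x))) => // [|t].
    apply: (continuous_within_comp (B := closure A)) => [t|t|//].
      exact: line_continuous.
    rewrite /= in_itv /= => /andP[t0]; rewrite le_eqVlt => /predU1P[->//|tT].
    by apply/subset_closure/A_before; rewrite t0.
  rewrite in_itv /= => /andP[t0 tT]; rewrite -derivable_line -derive_line.
  by apply/uL/A_before; rewrite ltW.
rewrite line0 subr0 ler_distlC => /andP[_ /le_trans]; apply.
by rewrite lerD2l ler_wpM2l.
Qed.

End ray.

Section solutions.
Variables (R : realType) (n : nat).
Local Notation V := 'rV[R]_n.
Implicit Types (u : V -> R) (x v : V).

Lemma norm_evec (i : 'I_n) : `|evec R i| = 1.
Proof.
apply/eqP; rewrite eq_le; apply/andP; split.
  rewrite [leLHS]/Num.norm /= mx_normrE; apply: bigmax_le => // -[a b] _ /=.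
  by rewrite /evec mxE; case: (_ && _); rewrite ?normr1 ?normr0.
rewrite [leRHS]/Num.norm /= mx_normrE; apply/bigmax_geP; right; exists (0, i) => //=.
by rewrite /evec mxE !eqxx normr1.
Qed.

Lemma eucl_sq_lt1_coord (w : V) (i : 'I_n) : eucl_sq w < 1 -> `|w 0 i| <= 1.
Proof.
rewrite /eucl_sq (bigD1 i) //= => sum_lt1.
have : w 0 i ^+ 2 <= 1.
  apply/ltW; apply: le_lt_trans sum_lt1; rewrite lerDl.
  by apply: sumr_ge0 => j _; exact: sqr_ge0.
by rewrite -real_normK ?num_real // expr_le1.
Qed.

Lemma compact_closure_bounded (A : set V) (M : R) :
  (forall z, A z -> `|z| <= M) -> compact (closure A).
Proof.
move=> AM; apply: bounded_closed_compact; last exact: closed_closure.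
exists M; split; first exact: num_real.
by move=> y yM z /(closure_norm_le AM) /le_trans; apply; rewrite ltW.
Qed.

Lemma inv_sqrt_grad_line_continuous u x v :
  (forall j, derivable (partial u j) x v) -> grad_sq u x < 1 ->
  {for 0, continuous (fun t : R => (Num.sqrt (1 - grad_sq u (t *: v + x)))^-1)}.
Proof.
move=> du g1.
have sq_cont j : {for 0, continuous (fun t : R => partial u j (t *: v + x) ^+ 2)}.
  exact: (continuous_comp (derivable_line_continuous (du j)) (@exprn_continuous R 2 _)).
have grad_cont : {for 0, continuous (fun t : R => 1 - grad_sq u (t *: v + x))}.
  apply: continuousB; first exact: cvg_cst.
  rewrite /prop_for /continuous_at /grad_sq.
  by apply: (@cvg_big _ _ +%R 0 xpredT add_continuous) => // j _; exact: sq_cont.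
apply: continuousV; first by rewrite line0 sqrtr_eq0 -ltNge subr_gt0.
by apply: continuous_comp grad_cont _; exact: sqrt_continuous.
Qed.

Lemma divergence_at_critical_point u x :
  (forall i, partial u i x = 0) -> (forall i j, derivable (partial u i) x (evec R j)) ->
  divergence (fun y => \row_i (partial u i y / Num.sqrt (1 - grad_sq u y))) x =
  \sum_i partial (partial u i) i x.
Proof.
(* The weight (1 - |Du|^2)^(-1/2) need not be differentiable: since Du x = 0,
   its continuity along coordinate lines is enough. *)
move=> du0 ddu; have g0 : grad_sq u x = 0.
  by rewrite /grad_sq big1 // => i _; rewrite du0 expr0n.
apply: eq_bigr => i _; rewrite /partial.
under eq_fun do rewrite mxE.
rewrite deriveM_at_root ?g0 ?subr0 ?sqrtr1 ?invr1 ?mulr1 //; [exact: du0|exact: ddu|].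
by apply: inv_sqrt_grad_line_continuous => [j|]; rewrite ?g0 ?ltr01.
Qed.

Lemma solution_no_local_min (Omega : set V) alpha u x0 :
  open Omega -> alpha < 0 -> C2_on Omega u -> Omega x0 -> 0 < u x0 ->
  (\forall y \near x0, u x0 <= u y) ->
  divergence (fun y => \row_i (partial u i y / Num.sqrt (1 - grad_sq u y))) x0
  <> alpha / (u x0 * Num.sqrt (1 - grad_sq u x0)).
Proof.
move=> oO a0 C2u Ox0 u0 umin.
have near_Omega : \forall y \near x0, Omega y by move: oO; rewrite openE; apply.
have du_near i : \forall y \near x0, derivable u y (evec R i).
  by apply: filterS near_Omega => y /C2u[+ _]; apply.
have du0 i : partial u i x0 = 0 by exact: derive_at_local_min (du_near i).
have ddu i j : derivable (partial u i) x0 (evec R j) by have [_ /(_ i j)[]] := C2u _ Ox0.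
have g0 : grad_sq u x0 = 0 by rewrite /grad_sq big1 // => i _; rewrite du0 expr0n.
rewrite divergence_at_critical_point // g0 subr0 sqrtr1 mulr1 => lap_eq.
have : 0 <= alpha / u x0.
  rewrite -lap_eq sumr_ge0 // => i _; exact: second_derive_at_local_min_ge0 (du_near i) (ddu i i).
by rewrite pmulr_lge0 ?invr_gt0 // leNgt a0.
Qed.

Lemma solution_min_on_bdry (Omega : set V) alpha phi u :
  open Omega -> compact (closure Omega) -> Omega !=set0 -> alpha < 0 ->
  positive_solution Omega alpha phi u ->
  exists2 c, bdry Omega c & forall x, closure Omega x -> u c <= u x.
Proof.
move=> oO cO [x0 Ox0] a0 [C2u [uc _] upos ueq _].
have K0 : closure Omega !=set0 by exists x0; exact: subset_closure.
have [c /[1!inE] Kc cmin] := compact_EVT_min K0 cO uc.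
exists c => [|x Kx]; last by apply: cmin; rewrite inE.
split => //; rewrite (interior_id _).1 // => Oc.
apply: (solution_no_local_min oO a0 C2u Oc (upos c Oc)) (ueq c Oc).
have : \forall y \near c, Omega y by move: oO; rewrite openE; apply.
by apply: filterS => y /subset_closure Ky; apply: cmin; rewrite inE.
Qed.

Lemma solution_le_bdry (Omega : set V) (i : 'I_n) alpha phi u M x :
  open Omega -> (forall z, Omega z -> `|z| <= M) ->
  positive_solution Omega alpha phi u -> Omega x ->
  exists2 y, bdry Omega y & u x <= u y + 2 * M.
Proof.
move=> oO OM [C2u [uc [G [_ [G_du G1]]]] _ _ _] Ox.
have du z : Omega z -> derivable u z (evec R i) /\ `|'D_(evec R i) u z| <= 1.
  move=> Oz; split; first by have [+ _] := C2u _ Oz; apply.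
  rewrite -/(partial u i z) -G_du //.
  exact/eucl_sq_lt1_coord/G1/subset_closure.
have [y [Ky notOy]] := exit_point_le oO Ox (norm_evec i) OM uc du.
by rewrite mul1r; exists y => //; split; rewrite ?(interior_id _).1.
Qed.

Lemma solution_bdry_has_ubound (Omega : set V) alpha phi u :
  compact (closure Omega) -> positive_solution Omega alpha phi u ->
  has_ubound [set phi y | y in bdry Omega].
Proof.
move=> cO [_ [uc _] _ _ u_phi].
have [[y [Ky _]]|] := pselect (bdry Omega !=set0); last first.
  by move=> /set0P/negP/negbNE/eqP ->; rewrite image_set0; exists 0.
have [c _ cmax] := compact_EVT_max (ex_intro _ y Ky) cO uc.
by exists (u c) => _ [z Bz <-]; rewrite -u_phi //; apply: cmax; rewrite inE; case: Bz.
Qed.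

End solutions.

Theorem proposition4p6 (R : realType) (n : nat) (Omega : set 'rV[R]_n)
    (alpha : R) (phi : 'rV[R]_n -> R) :
  (0 < n)%N ->
  open Omega -> connected Omega -> Omega !=set0 -> bounded_set Omega ->
  alpha < 0 ->
  (forall x, bdry Omega x -> 0 < phi x) ->
  exists C1 : R, 0 < C1 /\
    forall u : 'rV[R]_n -> R, positive_solution Omega alpha phi u ->
      forall x, Omega x ->
        inf [set phi y | y in bdry Omega] <= u x /\ u x <= C1.
Proof.
move=> n0 oO _ O0 bO a0 phi_gt0.
have [M M0 /= OM] := ex_strict_bound_gt0 bO.
have {}OM z : Omega z -> `|z| <= M by move=> /OM /ltW.
have cO := compact_closure_bounded OM.
(* B is a junk value when phi is unbounded on the boundary, but then there is
   no solution (solution_bdry_has_ubound). *)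
set B := sup [set phi y | y in bdry Omega].
exists (`|B| + 2 * M + 1); split.
  by rewrite ltr_pwDr // addr_ge0 // mulr_ge0 // ltW.
move=> u sol x Ox; split.
  have [c bc cmin] := solution_min_on_bdry oO cO O0 a0 sol.
  apply: le_trans (cmin x (subset_closure Ox)).
  case: sol bc => _ _ _ _ u_phi bc; rewrite u_phi //.
  by apply: ge_inf; [exists 0 => _ [y /phi_gt0 /ltW ? <-] | exists c].
have [y By uxy] := solution_le_bdry (Ordinal n0) oO OM sol Ox.
have uyB : u y <= `|B|.
  have phi_ub := solution_bdry_has_ubound cO sol.
  case: sol => _ _ _ _ -> //; apply: le_trans (ler_norm _).
  by apply: sup_upper_bound; [split; [exists (phi y), y | exact: phi_ub] | exists y].
lra.
Qed.
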